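(* Let $(H,e)$ be a unital Hilbert space. Then, with respect to the matrix pairing between $M(H)$ and $M(\overline H)$, $(\max\overline{\mathfrak c_e})^\boxdot=\min\mathfrak c_e$ and $(\min\overline{\mathfrak c_e})^\boxdot=\max\mathfrak c_e$.
   Context: A Hilbert $*$-space is a complex Hilbert space $H$ (inner product linear in the first variable) with a conjugate-linear map $\zeta\mapsto\zeta^*$, $\zeta^{**}=\zeta$, $(\zeta^*,\eta^* )=\overline{(\zeta,\eta)}$. A unital Hilbert space $(H,e)$ has a fixed hermitian unit vector $e$, and unital cone $\mathfrak c_e=\{\zeta\in H_h:\|\zeta\|\le\sqrt2(\zeta,e)\}$. The conjugate space $\overline H$ (vectors $\bar\eta$, $\lambda\bar\eta=\overline{\bar\lambda\eta}$, $(\bar\zeta,\bar\eta)=\overline{(\zeta,\eta)}$, involution $\bar\eta^*=\overline{\eta^*}$) is a unital Hilbert space with unit $\bar e$ and cone $\overline{\mathfrak c_e}=\{\bar\zeta:\zeta\in\mathfrak c_e\}$; $H,\overline H$ are paired by $\langle\zeta,\bar\eta\rangle=(\zeta,\eta)$. Matrices over $H$ or $\overline H$ carry the involution $[x_{ij}]^*=[x_{ji}^*]$. Matrix pairing: for $\zeta\in M_m(H)$, $\bar\eta=[\overline{\eta_{st}}]\in M_n(\overline H)$, $\langle\langle\zeta,\bar\eta\rangle\rangle=[(\zeta_{ik},\eta_{jl})]_{(i,j),(k,l)}\in M_{mn}$. Quantum polar of a family $\mathfrak M$ of matrices over $H$: $\mathfrak M^\boxdot=\{\bar\eta\in M_n(\overline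 H)_h, n\ge1:\langle\langle\zeta,\bar\eta\rangle\rangle\ge0\ \forall\zeta\in\mathfrak M\}$; symmetrically, for a family $\mathfrak N$ over $\overline H$, $\mathfrak N^\boxdot=\{\zeta\in M_n(H)_h:\langle\langle\zeta,\bar\eta\rangle\rangle\ge0\ \forall\bar\eta\in\mathfrak N\}$ (a set of vectors is a family at level $1$). For a unital Hilbert space $(K,u)$ with cone $\mathfrak c_u$: a state is a linear functional $\sigma$ on $K$ with $\sigma(u)=1$, $\sigma(\mathfrak c_u)\ge0$; $\min\mathfrak c_u\cap M_n(K)=\{x\in M_n(K)_h:[\sigma(x_{ij})]\ge0\ \forall$ states $\sigma\}$; $\max\mathfrak c_u=\mathfrak c_u^{\boxdot\boxdot}$. These apply to $(H,e)$ and to $(\overline H,\bar e)$. *)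

From HB Require Import structures.
From mathcomp Require Import all_boot all_order all_algebra.
Set Implicit Arguments. Unset Strict Implicit. Unset Printing Implicit Defensive.
Import Order.TTheory GRing.Theory Num.Theory.
Local Open Scope ring_scope.

Section Defs.
Variable C : numClosedFieldType.

(* C is (isomorphic to) the field of complex numbers: its real line has the
   least-upper-bound property (together with algebraic closedness this
   characterises C up to isomorphism). *)
Definition real_lub_complete : Prop :=
  forall A : C -> Prop,
    (forall x, A x -> x \is Num.real) ->
    (exists x, A x) ->
    (exists M, M \is Num.real /\ forall x, A x -> x <= M) ->
    exists s, s \is Num.real /\ (forall x, A x -> x <= s) /\
      (forall M, M \is Num.real -> (forall x, A x -> x <= M) -> s <= M).

Record hilbertStar (V : lmodType C) := HilbertStar {
  ip : V -> V -> C;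
  star : V -> V;
  ip_linl : forall a x y z, ip (a *: x + y) z = a * ip x z + ip y z;
  ip_herm : forall x y, ip y x = (ip x y)^*;
  ip_pos : forall x, 0 <= ip x x;
  ip_def : forall x, ip x x = 0 -> x = 0;
  ip_complete : forall u : nat -> V,
    (forall eps, 0 < eps -> exists N, forall m n, (N <= m)%N -> (N <= n)%N ->
        sqrtC (ip (u m - u n) (u m - u n)) < eps) ->
    exists l, forall eps, 0 < eps -> exists N, forall n, (N <= n)%N ->
        sqrtC (ip (u n - l) (u n - l)) < eps;
  star_semilin : forall a x y, star (a *: x + y) = a^* *: star x + star y;
  star_invol : forall x, star (star x) = x;
  star_ip : forall x y, ip (star x) (star y) = (ip x y)^*
}.

(* The conjugate space: same additive group, scalar action a . x := a^* x. *)
Definition conjsp (V : lmodType C) : Type := V.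
End Defs.

Section Conj.
Variable C : numClosedFieldType.
Variable V : lmodType C.
HB.instance Definition _ := GRing.Zmodule.on (conjsp V).
Definition conj_scale (a : C) (v : conjsp V) : conjsp V := (a^* *: (v : V)).
Lemma conj_scalerA a b v : conj_scale a (conj_scale b v) = conj_scale (a * b) v.
Proof. by rewrite /conj_scale scalerA rmorphM. Qed.
Lemma conj_scale1r : left_id 1 conj_scale.
Proof. by move=> v; rewrite /conj_scale rmorph1 scale1r. Qed.
Lemma conj_scalerDr : right_distributive conj_scale +%R.
Proof. by move=> a u v; rewrite /conj_scale scalerDr. Qed.
Lemma conj_scalerDl v : {morph conj_scale^~ v : a b / a + b}.
Proof. by move=> a b; rewrite /conj_scale rmorphD scalerDl. Qed.
HB.instance Definition _ := GRing.Zmodule_isLmodule.Build C (conjsp V)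
  conj_scalerA conj_scale1r conj_scalerDr conj_scalerDl.
End Conj.

Section Cones.
Variable C : numClosedFieldType.

Definition psd (I : finType) (K : I -> I -> C) : Prop :=
  (forall a b, K b a = (K a b)^*) /\
  (forall v : I -> C, 0 <= \sum_a \sum_b (v a)^* * K a b * v b).

Definition family (V : Type) := forall n : nat, 'M[V]_n -> Prop.

Definition fam_eq (V : Type) (F G : family V) : Prop :=
  forall n (x : 'M[V]_n), F n x <-> G n x.

Definition lvl1 (V : Type) (S : V -> Prop) : family V :=
  fun n => match n return 'M[V]_n -> Prop with
           | 1%N => fun x => S (x ord0 ord0)
           | _ => fun _ => False
           end.

Definition hermmx (V : Type) (st : V -> V) n (x : 'M[V]_n) : Prop :=
  forall i j, x i j = st (x j i).

Definition ucone (K : lmodType C) (ipK : K -> K -> C) (stK : K -> K) (u : K)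
  (z : K) : Prop :=
  stK z = z /\ sqrtC (ipK z z) <= sqrtC 2%:R * ipK z u.

Definition is_state (K : lmodType C) (ipK : K -> K -> C) (stK : K -> K) (u : K)
  (s : K -> C) : Prop :=
  (forall a x y, s (a *: x + y) = a * s x + s y) /\ s u = 1 /\
  (forall z, ucone ipK stK u z -> 0 <= s z).

Definition minc (K : lmodType C) (ipK : K -> K -> C) (stK : K -> K) (u : K)
  : family K :=
  fun n x => (0 < n)%N /\ hermmx stK x /\
    forall s, is_state ipK stK u s -> psd (fun i j : 'I_n => s (x i j)).

Variable H : lmodType C.
Variable hs : hilbertStar H.

Definition ipbar (x y : conjsp H) : C := (ip hs (x : H) (y : H))^*.
Definition starbar (x : conjsp H) : conjsp H := star hs (x : H).

Definition mxpair m n (z : 'M[H]_m) (eb : 'M[conjsp H]_n) :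
  'I_m * 'I_n -> 'I_m * 'I_n -> C :=
  fun p q => ip hs (z p.1 q.1) (eb p.2 q.2 : H).

Definition polarH (M : family H) : family (conjsp H) :=
  fun n eb => (0 < n)%N /\ hermmx starbar eb /\
    forall m (z : 'M[H]_m), M m z -> psd (mxpair z eb).

Definition polarHbar (N : family (conjsp H)) : family H :=
  fun n z => (0 < n)%N /\ hermmx (star hs) z /\
    forall m (eb : 'M[conjsp H]_m), N m eb -> psd (mxpair z eb).

Definition maxcH (e : H) : family H :=
  polarHbar (polarH (lvl1 (ucone (ip hs) (star hs) e))).
Definition maxcHbar (e : H) : family (conjsp H) :=
  polarH (polarHbar (lvl1 (ucone ipbar starbar (e : conjsp H)))).
Definition mincH (e : H) : family H := minc (ip hs) (star hs) e.
Definition mincHbar (e : H) : family (conjsp H) :=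
  minc ipbar starbar (e : conjsp H).
End Cones.

(* The proof rests on
   three facts:
   - over C a matrix is positive semidefinite iff its quadratic form is
     nonnegative (polarization), and this is invariant under relabelling;
   - c_e is self-dual: a hermitian vector pairs nonnegatively with all of c_e
     iff it lies in c_e;
   - hence a hermitian matrix x is positive under every state iff the scalar
     matrices [(x_ij, eta)] are psd for all eta in c_e: each eta with
     (eta, e) > 0 yields the state (., eta)/(eta, e), and conversely the
     combinations sum_ij conj(v_i) v_j x_ij lie in the dual of c_e.
   The conjugate space Hbar is again a Hilbert *-space with the same cone, so
   this describes min c_e and min cbar_e alike as polars of level-one
   families.  Then (max cbar_e)^polar = (cbar_e)^polar^polar^polar =
   (cbar_e)^polar = min c_e, and (min cbar_e)^polar = (c_e^polar)^polar =
   max c_e. *)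
From Pilot Require Import Defs.
From HB Require Import structures.
From mathcomp Require Import all_boot all_order all_algebra ring.
Import Order.TTheory GRing.Theory Num.Theory.
Local Open Scope ring_scope.
Set Implicit Arguments. Unset Strict Implicit.

Section Forms.
Variables (C : numClosedFieldType) (I : finType).
Implicit Types (K : I -> I -> C) (v w : I -> C).

Definition sform K v w := \sum_a \sum_b (v a)^* * K a b * w b.
Definition qform K v := sform K v v.

Lemma sformDl K v1 v2 w :
  sform K (fun c => v1 c + v2 c) w = sform K v1 w + sform K v2 w.
Proof.
rewrite /sform -big_split; apply: eq_bigr => a _; rewrite -big_split.
by apply: eq_bigr => b _; rewrite rmorphD /= !mulrDl.
Qed.

Lemma sformDr K v w1 w2 :
  sform K v (fun c => w1 c + w2 c) = sform K v w1 + sform K v w2.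
Proof.
rewrite /sform -big_split; apply: eq_bigr => a _; rewrite -big_split.
by apply: eq_bigr => b _; rewrite mulrDr.
Qed.

Lemma sformZl K x v w : sform K (fun c => x * v c) w = x^* * sform K v w.
Proof.
rewrite /sform mulr_sumr; apply: eq_bigr => a _; rewrite mulr_sumr.
by apply: eq_bigr => b _; rewrite rmorphM /= !mulrA.
Qed.

Lemma sformZr K x v w : sform K v (fun c => x * w c) = x * sform K v w.
Proof.
rewrite /sform mulr_sumr; apply: eq_bigr => a _; rewrite mulr_sumr.
by apply: eq_bigr => b _; rewrite mulrCA mulrA.
Qed.

Definition delta (a : I) : I -> C := fun c => ((c == a)%:R : C).

Lemma sform_delta K a b : sform K (delta a) (delta b) = K a b.
Proof.
rewrite /sform (bigD1 a) //= [X in _ + X]big1 ?addr0; last first.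
  by move=> c /negbTE ac; apply: big1 => d _; rewrite /delta ac rmorph0 !mul0r.
rewrite (bigD1 b) //= big1 ?addr0; last first.
  by move=> d /negbTE db; rewrite /delta db mulr0.
by rewrite /delta !eqxx rmorph1 mul1r mulr1.
Qed.

(* Polarization: a kernel whose quadratic form is real-valued is hermitian
   (test the form on delta a + delta b and on delta a + i delta b). *)
Lemma real_qform_hermitian K :
  (forall v, qform K v \is Num.real) -> forall a b, K b a = (K a b)^*.
Proof.
move=> Kreal a b.
have expand x : qform K (fun c => delta a c + x * delta b c)
    = K a a + x * K a b + x^* * K b a + x^* * x * K b b.
  by rewrite /qform sformDl !sformDr !sformZl !sformZr !sform_delta; ring.
have conj_qform v : (qform K v)^* = qform K v by apply: conj_Creal.
have Kaa : (K a a)^* = K a a by rewrite -sform_delta conj_qform.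
have Kbb : (K b b)^* = K b b by rewrite -sform_delta conj_qform.
have E1 := conj_qform (fun c => delta a c + 1 * delta b c).
rewrite expand !rmorphD !rmorphM /= rmorph1 Kaa Kbb in E1.
have E2 := conj_qform (fun c => delta a c + 'i * delta b c).
rewrite expand !rmorphD !rmorphM /= Kaa Kbb conjCK conjCi in E2.
set X := K a b in E1 E2 *; set Y := K b a in E1 E2 *.
set p := K a a in E1 E2; set q := K b b in E1 E2.
have ii : 'i * 'i + 1 = 0 :> C by rewrite -expr2 sqrCi addNr.
(* 2 (Y - conj X) is a linear combination of the two reality identities. *)
have : 2%:R * (Y - X^*) = 0.
  have -> : 2%:R * (Y - X^*) =
     ((p + 1 * X + 1 * Y + 1 * 1 * q) - (p + 1 * X^* + 1 * Y^* + 1 * 1 * q))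
     + 'i * ((p + 'i * X + - 'i * Y + - 'i * 'i * q)
             - (p + - 'i * X^* + 'i * Y^* + 'i * - 'i * q))
     - ('i * 'i + 1) * (X - Y + X^* - Y^*) by ring.
  by rewrite -E1 -E2 ii !rmorph1 !subrr mulr0 mul0r addr0 subr0.
by move/eqP; rewrite mulf_eq0 pnatr_eq0 /= subr_eq0 => /eqP.
Qed.

(* Over C, positive semidefiniteness is just nonnegativity of the
   quadratic form: the hermitian symmetry comes for free. *)
Lemma psdP K : psd K <-> forall v, 0 <= qform K v.
Proof.
split=> [[] // | Kpos]; split=> //.
by apply: real_qform_hermitian => v; apply: ger0_real.
Qed.

Lemma qform_ext K K' v : (forall i j, K i j = K' i j) -> qform K v = qform K' v.
Proof.
by move=> KK'; apply: eq_bigr => a _; apply: eq_bigr => b _; rewrite KK'.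
Qed.

Lemma psd_ext K K' : (forall i j, K i j = K' i j) -> psd K -> psd K'.
Proof. by move=> KK' /psdP K_pos; apply/psdP => v; rewrite -(qform_ext v KK'). Qed.

Lemma qform_scale K c v : qform (fun i j => K i j * c) v = qform K v * c.
Proof.
rewrite /qform /sform mulr_suml; apply: eq_bigr => a _; rewrite mulr_suml.
by apply: eq_bigr => b _; rewrite mulrA mulrAC.
Qed.

Lemma psd0 : psd (fun _ _ : I => 0 : C).
Proof.
by apply/psdP => v; rewrite /qform /sform big1 // => a _;
  rewrite big1 // => b _; rewrite mulr0 mul0r.
Qed.

Lemma psd_scale K c : 0 < c -> psd (fun i j => K i j * c) -> psd K.
Proof.
move=> c_gt0 /psdP Kc_pos; apply/psdP => v.
by have := Kc_pos v; rewrite qform_scale pmulr_lge0.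
Qed.

End Forms.

Lemma psd_reindex (C : numClosedFieldType) (I J : finType) (f : I -> J)
  (K : J -> J -> C) (K' : I -> I -> C) :
  bijective f -> (forall i j, K' i j = K (f i) (f j)) -> psd K <-> psd K'.
Proof.
move=> f_bij K'E.
have qformE (w : J -> C) (v : I -> C) :
    (forall i, v i = w (f i)) -> qform K w = qform K' v.
  move=> vE; rewrite /qform /sform (reindex f) /=; last exact: onW_bij.
  apply: eq_bigr => a _; rewrite (reindex f) /=; last exact: onW_bij.
  by apply: eq_bigr => b _; rewrite K'E !vE.
have [g fK gK] := f_bij.
split=> /psdP Kpos; apply/psdP => v.
  by rewrite -(qformE (fun j => v (g j)) v) // => i; rewrite fK.
by rewrite (qformE v (fun i => v (f i))).
Qed.

Section LinearFunctional.
Variables (C : numClosedFieldType) (V : lmodType C).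

Definition clinear (s : V -> C) := forall a x y, s (a *: x + y) = a * s x + s y.

Variables (s : V -> C) (s_lin : clinear s).

Lemma clinearD x y : s (x + y) = s x + s y.
Proof. by rewrite -[x in LHS]scale1r s_lin mul1r. Qed.

Lemma clinear0 : s 0 = 0.
Proof. by apply: (addrI (s 0)); rewrite -clinearD !addr0. Qed.

Lemma clinearZ a x : s (a *: x) = a * s x.
Proof. by rewrite -[a *: x]addr0 s_lin clinear0 addr0. Qed.

Lemma clinearB x y : s (x - y) = s x - s y.
Proof. by rewrite clinearD -scaleN1r clinearZ mulN1r. Qed.

Lemma clinear_sum (J : Type) (r : seq J) (P : pred J) (F : J -> V) :
  s (\sum_(j <- r | P j) F j) = \sum_(j <- r | P j) s (F j).
Proof. exact: (big_morph _ clinearD clinear0). Qed.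

Definition compress n (x : 'M[V]_n) (v : 'I_n -> C) : V :=
  \sum_i \sum_j ((v i)^* * v j) *: x i j.

Lemma clinear_compress n (x : 'M[V]_n) v :
  s (compress x v) = qform (fun i j => s (x i j)) v.
Proof.
rewrite clinear_sum; apply: eq_bigr => i _; rewrite clinear_sum.
by apply: eq_bigr => j _; rewrite clinearZ mulrAC.
Qed.
End LinearFunctional.

Section HilbertStarAlgebra.
Variables (C : numClosedFieldType) (K : lmodType C) (hK : hilbertStar K).
Local Notation ip := (ip hK).
Local Notation st := (star hK).

Lemma ip_clinear z : clinear (ip ^~ z).
Proof. by move=> a x y; apply: ip_linl. Qed.

Lemma ip0l z : ip 0 z = 0. Proof. exact: (clinear0 (ip_clinear z)). Qed.
Lemma ipDl x y z : ip (x + y) z = ip x z + ip y z.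
Proof. exact: (clinearD (ip_clinear z)). Qed.
Lemma ipZl a x z : ip (a *: x) z = a * ip x z.
Proof. exact: (clinearZ (ip_clinear z)). Qed.
Lemma ipBl x y z : ip (x - y) z = ip x z - ip y z.
Proof. exact: (clinearB (ip_clinear z)). Qed.

Lemma ip0r z : ip z 0 = 0. Proof. by rewrite ip_herm ip0l rmorph0. Qed.
Lemma ipDr x y z : ip z (x + y) = ip z x + ip z y.
Proof. by rewrite ip_herm ipDl rmorphD /= -!ip_herm. Qed.
Lemma ipZr a x z : ip z (a *: x) = a^* * ip z x.
Proof. by rewrite ip_herm ipZl rmorphM /= -ip_herm. Qed.
Lemma ipBr x y z : ip z (x - y) = ip z x - ip z y.
Proof. by rewrite ip_herm ipBl rmorphB /= -!ip_herm. Qed.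

Lemma stD x y : st (x + y) = st x + st y.
Proof. by rewrite -[x in LHS]scale1r star_semilin rmorph1 scale1r. Qed.
Lemma st0 : st 0 = 0.
Proof. by apply: (addrI (st 0)); rewrite -stD !addr0. Qed.
Lemma stZ a x : st (a *: x) = a^* *: st x.
Proof. by rewrite -[a *: x]addr0 star_semilin st0 addr0. Qed.
Lemma stB x y : st (x - y) = st x - st y.
Proof. by rewrite stD -scaleN1r stZ rmorphN1 scaleN1r. Qed.
Lemma st_sum (J : Type) (r : seq J) (P : pred J) (F : J -> K) :
  st (\sum_(j <- r | P j) F j) = \sum_(j <- r | P j) st (F j).
Proof. exact: (big_morph _ stD st0). Qed.

Lemma ip_herm_real x y : st x = x -> st y = y -> (ip x y)^* = ip x y.
Proof. by move=> hx hy; rewrite -star_ip hx hy. Qed.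

Lemma ip_self_real x : (ip x x)^* = ip x x.
Proof. by apply: conj_Creal; apply: ger0_real; apply: ip_pos. Qed.

Lemma compress_herm n (x : 'M[K]_n) v :
  hermmx st x -> st (compress x v) = compress x v.
Proof.
move=> hx; rewrite /compress st_sum.
under eq_bigr => i _ do rewrite st_sum.
rewrite exchange_big /=; apply: eq_bigr => i _; apply: eq_bigr => j _.
by rewrite stZ rmorphM /= conjCK mulrC -hx.
Qed.
End HilbertStarAlgebra.

Lemma sqrtC_cone (C : numClosedFieldType) (N a : C) : 0 <= N ->
  (sqrtC N <= sqrtC 2%:R * a) <-> (0 <= a /\ N <= 2%:R * a ^+ 2).
Proof.
move=> N_ge0.
have sqrt2_gt0 : 0 < sqrtC (2%:R : C) by rewrite sqrtC_gt0 ltr0n.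
have sqrt2a : 0 <= a -> sqrtC 2%:R * a = sqrtC (2%:R * a ^+ 2).
  by move=> a_ge0; rewrite sqrtCM ?sqrCK // nnegrE ?exprn_ge0 ?ler0n.
split=> [Na | [a_ge0 Na]].
  have a_ge0 : 0 <= a.
    by rewrite -(pmulr_rge0 _ sqrt2_gt0); apply: le_trans Na; rewrite sqrtC_ge0.
  by split=> //; move: Na; rewrite sqrt2a // ler_sqrtC // nnegrE mulr_ge0
    ?ler0n ?exprn_ge0.
by rewrite sqrt2a // ler_sqrtC // nnegrE mulr_ge0 ?ler0n ?exprn_ge0.
Qed.

Section UnitalCone.
Variables (C : numClosedFieldType) (K : lmodType C) (hK : hilbertStar K).
Local Notation ip := (ip hK).
Local Notation st := (star hK).
Variable u : K.
Hypothesis u_herm : st u = u.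
Hypothesis u_unit : ip u u = 1.

Definition cone z := st z = z /\ 0 <= ip z u /\ ip z z <= 2%:R * ip z u ^+ 2.

Lemma uconeE z : ucone ip st u z <-> cone z.
Proof.
by rewrite /ucone /cone; split=> -[hz] /(sqrtC_cone _ (ip_pos hK z)).
Qed.

Lemma ip_u_sym x : st x = x -> ip u x = ip x u.
Proof. by move=> hx; rewrite ip_herm ip_herm_real. Qed.

Lemma cone_unit : cone u.
Proof.
by split=> //; rewrite u_unit expr1n mulr1 ler01 ler1n.
Qed.

Lemma cone_eq0 z : cone z -> ip z u = 0 -> z = 0.
Proof.
case=> _ [_ zz] zu0; apply: (@ip_def _ _ hK); apply/eqP.
by rewrite eq_le ip_pos andbT; move: zz; rewrite zu0 expr0n mulr0.
Qed.

(* The cone is self-dual, first half: cone vectors pair nonnegatively.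
   With a = (z,u), b = (eta,u), expand the norm of b z + a eta - 2ab u. *)
Lemma cone_dual z eta : cone z -> cone eta -> 0 <= ip z eta.
Proof.
move=> cz ceta; have [hz [a_ge0 zz]] := cz; have [heta [b_ge0 etaeta]] := ceta.
set a := ip z u in a_ge0 zz; set b := ip eta u in b_ge0 etaeta.
have [a0 | a_neq0] := eqVneq a 0; first by rewrite (cone_eq0 cz a0) ip0l.
have [b0 | b_neq0] := eqVneq b 0; first by rewrite (cone_eq0 ceta b0) ip0r.
have a_gt0 : 0 < a by rewrite lt_def a_neq0 a_ge0.
have b_gt0 : 0 < b by rewrite lt_def b_neq0 b_ge0.
have ar : a^* = a by apply: conj_Creal; apply: ger0_real.
have br : b^* = b by apply: conj_Creal; apply: ger0_real.
have uz : ip u z = a by rewrite ip_u_sym.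
have ueta : ip u eta = b by rewrite ip_u_sym.
set c := ip z eta.
have etaz : ip eta z = c by rewrite ip_herm ip_herm_real.
set w := b *: z + a *: eta - (2%:R * a * b) *: u.
have ww : ip w w = 2%:R * a * b * c
    - (b ^+ 2 * (2%:R * a ^+ 2 - ip z z) + a ^+ 2 * (2%:R * b ^+ 2 - ip eta eta)).
  rewrite /w !(ipBl, ipBr, ipDl, ipDr, ipZl, ipZr).
  rewrite !rmorphM /= ar br rmorphMn /= rmorph1 u_unit uz ueta etaz -/a -/b -/c.
  ring.
have abc_ge0 : 0 <= 2%:R * a * b * c.
  apply: le_trans (ip_pos hK w) _; rewrite ww lerBlDr lerDl.
  by rewrite addr_ge0 // mulr_ge0 ?exprn_ge0 // subr_ge0.
by move: abc_ge0; rewrite pmulr_rge0 // !mulr_gt0 ?ltr0n.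
Qed.

(* For a hermitian w orthogonal to u, the vector |w| u - w lies in the cone
   (it has (.,u) = |w| and squared norm 2|w|^2). *)
Lemma cone_test w : st w = w -> ip w u = 0 -> cone (sqrtC (ip w w) *: u - w).
Proof.
move=> hw wu; set r := sqrtC (ip w w).
have r_ge0 : 0 <= r by rewrite sqrtC_ge0 ip_pos.
have rr : r^* = r by apply: conj_Creal; apply: ger0_real.
have uw : ip u w = 0 by rewrite ip_herm wu rmorph0.
have etau : ip (r *: u - w) u = r by rewrite ipBl ipZl u_unit wu mulr1 subr0.
split; first by rewrite stB stZ u_herm rr hw.
rewrite etau; split=> //.
rewrite !(ipBl, ipBr, ipZl, ipZr) u_unit wu uw rr -[ip w w]sqrtCK -/r.
by rewrite !mulr0 subr0 sub0r opprK mulr1 -expr2 -mulr2n mulr_natl.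
Qed.

(* Second half of self-duality: a hermitian vector pairing nonnegatively
   with the cone lies in it.  Write w = a u + w' with w' orthogonal to u and
   test against |w'| u - w'. *)
Lemma cone_of_dual w :
  st w = w -> (forall eta, cone eta -> 0 <= ip w eta) -> cone w.
Proof.
move=> hw w_dual; set a := ip w u.
have a_ge0 : 0 <= a by apply: w_dual; apply: cone_unit.
have ar : a^* = a by apply: conj_Creal; apply: ger0_real.
set w' := w - a *: u.
have w'u : ip w' u = 0 by rewrite ipBl ipZl u_unit mulr1 subrr.
have hw' : st w' = w' by rewrite stB stZ hw u_herm ar.
have w'w' : ip w' w' = ip w w - a ^+ 2.
  rewrite !(ipBl, ipBr, ipZl, ipZr) ar u_unit (ip_u_sym hw) -/a; ring.
set r := sqrtC (ip w' w').
have r_ge0 : 0 <= r by rewrite sqrtC_ge0 ip_pos.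
have rr : r^* = r by apply: conj_Creal; apply: ger0_real.
have ww : ip w w = r ^+ 2 + a ^+ 2 by rewrite sqrtCK w'w' subrK.
have ww' : ip w w' = r ^+ 2.
  by rewrite sqrtCK w'w' /w' ipBr ipZr ar -/a expr2.
have := w_dual _ (cone_test hw' w'u); rewrite -/r ipBr ipZr rr -/a ww' => ra.
have r_le_a : r <= a.
  have [-> // | r_neq0] := eqVneq r 0.
  have r_gt0 : 0 < r by rewrite lt_def r_neq0 r_ge0.
  by rewrite -subr_ge0 -(pmulr_rge0 _ r_gt0) mulrBr -expr2.
split=> //; split=> //; rewrite ww mulrDl mul1r lerD2r.
by rewrite !expr2 ler_pM.
Qed.

Lemma state_of_cone eta : cone eta -> 0 < ip eta u ->
  is_state ip st u (fun x => ip x eta / ip eta u).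
Proof.
move=> ceta etau_gt0; split; first by move=> a x y; rewrite ip_linl mulrDl mulrA.
split; first by rewrite ip_u_sym ?divff ?gt_eqF //; case: ceta.
move=> x /uconeE cx; apply: mulr_ge0; first exact: cone_dual cx ceta.
by rewrite invr_ge0 ltW.
Qed.

(* One direction uses
   the states of cone vectors, the other self-duality on compressions. *)
Lemma states_vs_cone n (x : 'M[K]_n) : hermmx st x ->
  (forall s, is_state ip st u s -> psd (fun i j => s (x i j))) <->
  (forall eta, ucone ip st u eta -> psd (fun i j => ip (x i j) eta)).
Proof.
move=> hx; split=> [x_states eta /uconeE ceta | x_cone s [s_lin [_ s_pos]]].
  have [etau0 | etau_neq0] := eqVneq (ip eta u) 0.
    rewrite (cone_eq0 ceta etau0).
    by apply: (psd_ext _ (psd0 _ _)) => i j; rewrite ip0r.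
  have etau_gt0 : 0 < ip eta u by rewrite lt_def etau_neq0; case: ceta => _ [].
  apply: (psd_scale (c := (ip eta u)^-1)); first by rewrite invr_gt0.
  exact: x_states (state_of_cone ceta etau_gt0).
apply/psdP => v; rewrite -clinear_compress //; apply/s_pos/uconeE.
apply: cone_of_dual; first exact: compress_herm.
move=> eta /uconeE ceta; rewrite (clinear_compress (ip_clinear _ _)).
by have /psdP := x_cone eta ceta; apply.
Qed.

Lemma mincE n (x : 'M[K]_n) : minc ip st u x <->
  [/\ (0 < n)%N, hermmx st x &
      forall eta, ucone ip st u eta -> psd (fun i j => ip (x i j) eta)].
Proof.
split=> [[n_gt0 [hx x_states]] | [n_gt0 hx x_cone]].
  by split=> //; apply/states_vs_cone.
by split=> //; split=> //; apply/states_vs_cone.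
Qed.
End UnitalCone.

Section ConjugateSpace.
Variables (C : numClosedFieldType) (H : lmodType C) (hs : hilbertStar H).
Local Notation ip := (ip hs).
Local Notation st := (star hs).
Local Notation ipbar := (ipbar hs).
Local Notation starbar := (starbar hs).

Lemma ipbar_self (x : conjsp H) : ipbar x x = ip x x.
Proof. exact: ip_self_real. Qed.

Lemma ipbar_linl a (x y z : conjsp H) :
  ipbar (a *: x + y) z = a * ipbar x z + ipbar y z.
Proof.
change ((ip (a^* *: (x : H) + y) z)^* = a * (ip x z)^* + (ip y z)^*).
by rewrite ip_linl rmorphD rmorphM /= conjCK.
Qed.

Lemma ipbar_herm (x y : conjsp H) : ipbar y x = (ipbar x y)^*.
Proof. by rewrite /ipbar conjCK -ip_herm. Qed.

Lemma ipbar_pos (x : conjsp H) : 0 <= ipbar x x.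
Proof. by rewrite ipbar_self ip_pos. Qed.

Lemma ipbar_def (x : conjsp H) : ipbar x x = 0 -> x = 0.
Proof. by rewrite ipbar_self; apply: ip_def. Qed.

Lemma ipbar_complete (w : nat -> conjsp H) :
  (forall eps, 0 < eps -> exists N, forall m n, (N <= m)%N -> (N <= n)%N ->
      sqrtC (ipbar (w m - w n) (w m - w n)) < eps) ->
  exists l, forall eps, 0 < eps -> exists N, forall n, (N <= n)%N ->
      sqrtC (ipbar (w n - l) (w n - l)) < eps.
Proof.
move=> w_cauchy; have [|l w_lim] := @ip_complete _ _ hs w.
  move=> eps /w_cauchy [N hN]; exists N => m k hm hk.
  by rewrite -ipbar_self; apply: hN.
by exists l => eps /w_lim [N hN]; exists N => k /hN; rewrite -ipbar_self.
Qed.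

Lemma starbar_semilin a (x y : conjsp H) :
  starbar (a *: x + y) = a^* *: starbar x + starbar y.
Proof.
change (st (a^* *: (x : H) + y) = a^*^* *: st x + st y).
by rewrite star_semilin conjCK.
Qed.

Lemma starbar_invol (x : conjsp H) : starbar (starbar x) = x.
Proof. exact: (@star_invol _ _ hs). Qed.

Lemma starbar_ip (x y : conjsp H) : ipbar (starbar x) (starbar y) = (ipbar x y)^*.
Proof. by rewrite /ipbar /starbar star_ip. Qed.

Definition conj_hilbertStar : hilbertStar (conjsp H) :=
  HilbertStar ipbar_linl ipbar_herm ipbar_pos ipbar_def ipbar_complete
    starbar_semilin starbar_invol starbar_ip.
End ConjugateSpace.

Section Polars.
Variables (C : numClosedFieldType) (H : lmodType C) (hs : hilbertStar H).
Local Notation ip := (ip hs).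
Local Notation st := (star hs).
Local Notation ipbar := (ipbar hs).
Local Notation starbar := (starbar hs).

(* The bipolar inclusion: a family of hermitian matrices of positive level
   over Hbar lies in its own bipolar, so taking a third polar changes nothing. *)
Lemma polar_triple (L : Defs.family (conjsp H)) :
  (forall m (eb : 'M_m), L m eb -> (0 < m)%N /\ hermmx starbar eb) ->
  fam_eq (polarHbar hs (polarH hs (polarHbar hs L))) (polarHbar hs L).
Proof.
move=> L_herm n z; split=> [[n_gt0 [hz z_pos]] | z_pol].
  split=> //; split=> // m eb L_eb; apply: z_pos.
  have [m_gt0 heb] := L_herm m eb L_eb.
  by split=> //; split=> // k x [_ [_ x_pos]]; apply: x_pos.
have [n_gt0 [hz _]] := z_pol; split=> //; split=> // m eb [_ [_ eb_pos]].
exact: eb_pos.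
Qed.

Lemma polarHbar_congr (N N' : Defs.family (conjsp H)) :
  fam_eq N N' -> fam_eq (polarHbar hs N) (polarHbar hs N').
Proof.
move=> NN' n z; split=> -[n_gt0 [hz z_pos]]; split=> //; split=> // m eb.
  by move/NN'; apply: z_pos.
by move/NN'; apply: z_pos.
Qed.

(* Pairing with a single vector: the Kronecker-indexed matrix <<z, [eta]>>
   is, up to relabelling 'I_n * 'I_1 as 'I_n, the matrix [(z_ij, eta)]. *)
Lemma mxpair_col n (z : 'M[H]_n) (M : 'M[conjsp H]_1) :
  psd (mxpair hs z M) <-> psd (fun i j => ip (z i j) (M ord0 ord0)).
Proof.
apply: (psd_reindex (f := fun i => (i, ord0))) => // .
by exists (fun p => p.1) => [// | [i k]]; rewrite (ord1 k).
Qed.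

Lemma mxpair_row n (M : 'M[H]_1) (eb : 'M[conjsp H]_n) :
  psd (mxpair hs M eb) <-> psd (fun i j => ipbar (eb i j) (M ord0 ord0)).
Proof.
apply: (psd_reindex (f := fun j => (ord0, j))) => [|i j]; last exact/esym/ip_herm.
by exists (fun p => p.2) => [// | [k j]]; rewrite (ord1 k).
Qed.

Lemma polarHbar_lvl1 (S : conjsp H -> Prop) n (z : 'M[H]_n) :
  polarHbar hs (lvl1 S) z <->
  [/\ (0 < n)%N, hermmx st z & forall eta, S eta -> psd (fun i j => ip (z i j) eta)].
Proof.
split=> [[n_gt0 [hz z_pos]] | [n_gt0 hz z_pos]].
  split=> // eta S_eta; have := z_pos 1%N (const_mx eta).
  by rewrite /= mxE => /(_ S_eta)/mxpair_col; rewrite mxE.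
by split=> //; split=> // [[|[|m]]] M //= S_M; apply/mxpair_col/z_pos.
Qed.

Lemma polarH_lvl1 (S : H -> Prop) n (eb : 'M[conjsp H]_n) :
  polarH hs (lvl1 S) eb <->
  [/\ (0 < n)%N, hermmx starbar eb &
      forall zeta, S zeta -> psd (fun i j => ipbar (eb i j) zeta)].
Proof.
split=> [[n_gt0 [heb eb_pos]] | [n_gt0 heb eb_pos]].
  split=> // zeta S_zeta; have := eb_pos 1%N (const_mx zeta).
  by rewrite /= mxE => /(_ S_zeta)/mxpair_row; rewrite mxE.
by split=> //; split=> // [[|[|m]]] M //= S_M; apply/mxpair_row/eb_pos.
Qed.
End Polars.

Section MinMaxDuality.
Variables (C : numClosedFieldType) (H : lmodType C) (hs : hilbertStar H) (e : H).
Hypothesis e_herm : star hs e = e.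
Hypothesis e_unit : ip hs e e = 1.
Local Notation ip := (ip hs).
Local Notation st := (star hs).
Local Notation ipbar := (ipbar hs).
Local Notation starbar := (starbar hs).

Lemma ucone_conj (z : H) : ucone ipbar starbar (e : conjsp H) z <-> ucone ip st e z.
Proof.
have ipbarE : st z = z -> ipbar z e = ip z e by move=> hz; apply: ip_herm_real.
by rewrite /ucone ipbar_self; split=> -[hz]; rewrite ipbarE.
Qed.

Lemma polar_conebar : fam_eq (polarHbar hs (lvl1 (ucone ipbar starbar e))) (mincH hs e).
Proof.
move=> n z; rewrite polarHbar_lvl1 /mincH (mincE e_herm e_unit).
by split=> -[n_gt0 hz z_pos]; split=> // eta /ucone_conj; apply: z_pos.
Qed.

Lemma mincHbarE : fam_eq (mincHbar hs e) (polarH hs (lvl1 (ucone ip st e))).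
Proof.
have ebar_unit : ipbar e e = 1 by rewrite ipbar_self.
move=> n eb; rewrite polarH_lvl1 /mincHbar (@mincE _ _ (conj_hilbertStar hs) e e_herm ebar_unit).
by split=> -[n_gt0 heb eb_pos]; split=> // zeta /ucone_conj; apply: eb_pos.
Qed.
End MinMaxDuality.

Theorem mainTheorem5 (C : numClosedFieldType) (hC : real_lub_complete C)
  (H : lmodType C) (hs : hilbertStar H) (e : H)
  (e_herm : star hs e = e) (e_unit : ip hs e e = 1) :
  fam_eq (polarHbar hs (maxcHbar hs e)) (mincH hs e) /\
  fam_eq (polarHbar hs (mincHbar hs e)) (maxcH hs e).
Proof.
split=> n z.
- have cone_herm m (eb : 'M_m) : lvl1 (ucone (ipbar hs) (starbar hs) e) eb ->
      (0 < m)%N /\ hermmx (starbar hs) eb.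
    by case: m eb => [|[|m]] eb //= [heb _]; split=> // i j; rewrite !ord1.
  rewrite /maxcHbar (polar_triple cone_herm).
  exact: polar_conebar.
- exact: (polarHbar_congr hs (mincHbarE e_herm e_unit)).
Qed.
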